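(* Let $(\alpha_1,\alpha_2)\in\mathbb{C}^2$ and $p_1,p_2\in\mathbb{C}[u]\setminus\{0\}$ satisfy $p_1(u+\alpha_2/2)p_2(u+\alpha_1/2)=p_1(u-\alpha_2/2)p_2(u-\alpha_1/2)$. Then the noncommutative Kleinian fiber product $\mathcal{A}_{\alpha_1,\alpha_2}(p_1,p_2)$ is isomorphic to the twisted generalized Weyl algebra $\mathcal{A}(R,\boldsymbol{\sigma},\boldsymbol{t})$ with $R=\mathbb{C}[u]$, $\boldsymbol{\sigma}=(\sigma_1,\sigma_2)$ where $\sigma_i(u)=u-\alpha_i$, and $\boldsymbol{t}=(p_1,p_2)$.
   Context: Noncommutative Kleinian fiber product: $\tilde{\mathcal{A}}_{\alpha_1,\alpha_2}(p_1,p_2)$ is generated by $H,X_1^\pm,X_2^\pm$ with relations ($i=1,2$) $HX_i^\pm-X_i^\pm H=\pm\alpha_iX_i^\pm$, $X_i^+X_i^-=p_i(H-\alpha_i/2)$, $X_i^-X_i^+=p_i(H+\alpha_i/2)$, $X_1^+X_2^-=X_2^-X_1^+$, $X_1^-X_2^+=X_2^+X_1^-$; $\mathcal{A}_{\alpha_1,\alpha_2}(p_1,p_2)$ is its quotient by the ideal of all $a$ with $f(H)a=0$ for some nonzero polynomial $f$. TGWA: for a commutative-or-not unital $\mathbb{C}$-algebra $R$, commuting automorphisms $\sigma_i^{1/2}$ ($\sigma_i=(\sigma_i^{1/2})^2$) and central $t_i$, $\tilde{\mathcal{A}}(R,\boldsymbol{\sigma},\boldsymbol{t})$ is obtained from $R$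 by adjoining $X_i^\pm$ with $X_i^\pm r=\sigma_i^{\pm1}(r)X_i^\pm$, $X_i^\pm X_i^\mp=\sigma_i^{\pm1/2}(t_i)$, $[X_i^\pm,X_j^\mp]=0$ ($i\neq j$), graded by $\deg r=0$, $\deg X_i^\pm=\pm\mathbf{e}_i$; $\mathcal{A}(R,\boldsymbol{\sigma},\boldsymbol{t})$ is its quotient by the sum of all graded ideals intersecting $R$ trivially. Here $\sigma_i^{1/2}(u)=u-\alpha_i/2$. *)

From HB Require Import structures.
From mathcomp Require Import all_boot all_order all_algebra.
From mathcomp Require Import reals.
From mathcomp Require Export complex.
Set Implicit Arguments. Unset Strict Implicit. Unset Printing Implicit Defensive.
Import Order.TTheory GRing.Theory Num.Theory.
Local Open Scope ring_scope.

Section KleinTGWA.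
Variable F : fieldType.

Definition peval (A : algType F) (p : {poly F}) (a : A) : A := horner_alg a p.

Definition is_ideal (A : algType F) (J : A -> Prop) : Prop :=
  [/\ J 0,
      (forall x y, J x -> J y -> J (x + y)),
      (forall (c : F) x, J x -> J (c *: x)) &
      (forall a x, J x -> J (a * x) /\ J (x * a))].

Definition KFP_rel (a1 a2 : F) (p1 p2 : {poly F}) (B : algType F)
    (H X1p X1m X2p X2m : B) : Prop :=
  H * X1p - X1p * H = a1 *: X1p/\
      H * X1m - X1m * H = - (a1 *: X1m)/\
      H * X2p - X2p * H = a2 *: X2p/\
      H * X2m - X2m * H = - (a2 *: X2m)/\
      X1p * X1m = peval p1 (H - (a1 / 2%:R)%:A)/\
      X1m * X1p = peval p1 (H + (a1 / 2%:R)%:A)/\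
      X2p * X2m = peval p2 (H - (a2 / 2%:R)%:A)/\
      X2m * X2p = peval p2 (H + (a2 / 2%:R)%:A)/\
      X1p * X2m = X2m * X1p /\
      X1m * X2p = X2p * X1m.

(* (A; H, X1+, X1-, X2+, X2-) is the algebra presented by the generators
   H, X_i^± and the relations above: universal property. *)
Definition KFP_presentation (a1 a2 : F) (p1 p2 : {poly F}) (A : algType F)
    (H X1p X1m X2p X2m : A) : Prop :=
  KFP_rel a1 a2 p1 p2 H X1p X1m X2p X2m /\
  forall (B : algType F) (H' X1p' X1m' X2p' X2m' : B),
    KFP_rel a1 a2 p1 p2 H' X1p' X1m' X2p' X2m' ->
    (exists f : {lrmorphism A -> B},
        [/\ f H = H', f X1p = X1p', f X1m = X1m', f X2p = X2p' & f X2m = X2m'])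
    /\ (forall f g : {lrmorphism A -> B},
          f H = g H -> f X1p = g X1p -> f X1m = g X1m ->
          f X2p = g X2p -> f X2m = g X2m -> f =1 g).

Definition KFP_quotient (At : algType F) (H : At) (Q : algType F)
    (pi : {lrmorphism At -> Q}) : Prop :=
  (forall y : Q, exists x : At, pi x = y) /\
  forall a : At, pi a = 0 <-> exists f : {poly F}, f != 0 /\ peval f H * a = 0.

(* The TGWA ~A(R, sigma, t) with R = F[u], sigma_i(u) = u - a_i,       *)
(* sigma_i^{1/2}(u) = u - a_i/2, t = (t1, t2).                         *)
(* The copy of R in the algebra is the image of r |-> r(U).            *)

Definition shiftp (c : F) (r : {poly F}) : {poly F} := r \Po ('X - c%:P).

Definition TGWA_rel (a1 a2 : F) (t1 t2 : {poly F}) (B : algType F)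
    (U X1p X1m X2p X2m : B) : Prop :=
  (forall r : {poly F},
         [/\ X1p * peval r U = peval (shiftp a1 r) U * X1p,
             X1m * peval r U = peval (shiftp (- a1) r) U * X1m,
             X2p * peval r U = peval (shiftp a2 r) U * X2p &
             X2m * peval r U = peval (shiftp (- a2) r) U * X2m]) /\
      X1p * X1m = peval (shiftp (a1 / 2%:R) t1) U /\
      X1m * X1p = peval (shiftp (- (a1 / 2%:R)) t1) U /\
      X2p * X2m = peval (shiftp (a2 / 2%:R) t2) U /\
      X2m * X2p = peval (shiftp (- (a2 / 2%:R)) t2) U /\
      X1p * X2m = X2m * X1p /\
      X1m * X2p = X2p * X1m.

Definition TGWA_presentation (a1 a2 : F) (t1 t2 : {poly F}) (A : algType F)
    (U X1p X1m X2p X2m : A) : Prop :=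
  TGWA_rel a1 a2 t1 t2 U X1p X1m X2p X2m /\
  forall (B : algType F) (U' X1p' X1m' X2p' X2m' : B),
    TGWA_rel a1 a2 t1 t2 U' X1p' X1m' X2p' X2m' ->
    (exists f : {lrmorphism A -> B},
        [/\ f U = U', f X1p = X1p', f X1m = X1m', f X2p = X2p' & f X2m = X2m'])
    /\ (forall f g : {lrmorphism A -> B},
          f U = g U -> f X1p = g X1p -> f X1m = g X1m ->
          f X2p = g X2p -> f X2m = g X2m -> f =1 g).

Inductive tgen := GU | GX1p | GX1m | GX2p | GX2m.

Definition tgen_deg (x : tgen) : int * int :=
  match x with
  | GU => (0, 0) | GX1p => (1, 0) | GX1m => (-1, 0)
  | GX2p => (0, 1) | GX2m => (0, -1)
  end.

Definition word_deg (w : seq tgen) : int * int :=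
  foldr (fun x d => ((tgen_deg x).1 + d.1, (tgen_deg x).2 + d.2)) (0, 0) w.

Definition tgen_val (A : algType F) (U X1p X1m X2p X2m : A) (x : tgen) : A :=
  match x with
  | GU => U | GX1p => X1p | GX1m => X1m | GX2p => X2p | GX2m => X2m
  end.

Definition word_val (A : algType F) (U X1p X1m X2p X2m : A) (w : seq tgen) : A :=
  \prod_(x <- w) tgen_val U X1p X1m X2p X2m x.

Definition homogeneous (A : algType F) (U X1p X1m X2p X2m : A)
    (g : int * int) (a : A) : Prop :=
  exists (ws : seq (seq tgen)) (cs : seq F),
    all (fun w => word_deg w == g) ws /\
    a = \sum_(k < size ws) cs`_k *: word_val U X1p X1m X2p X2m (nth [::] ws k).

Definition graded_ideal (A : algType F) (U X1p X1m X2p X2m : A)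
    (J : A -> Prop) : Prop :=
  is_ideal J /\
  forall a, J a -> exists (s : seq (int * int)) (c : int * int -> A),
      uniq s /\ a = \sum_(g <- s) c g /\
      forall g, g \in s -> J (c g) /\ homogeneous U X1p X1m X2p X2m g (c g).

Definition meets_R_trivially (A : algType F) (U : A) (J : A -> Prop) : Prop :=
  forall r : {poly F}, J (peval r U) -> peval r U = 0.

Definition TGWA_kernel (A : algType F) (U X1p X1m X2p X2m : A) (a : A) : Prop :=
  exists s : seq A, a = \sum_(x <- s) x /\
    forall x, x \in s -> exists J : A -> Prop,
      [/\ graded_ideal U X1p X1m X2p X2m J, meets_R_trivially U J & J x].

Definition TGWA_quotient (At : algType F) (U X1p X1m X2p X2m : At)
    (T : algType F) (rho : {lrmorphism At -> T}) : Prop :=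
  (forall y : T, exists x : At, rho x = y) /\
  forall a : At, rho a = 0 <-> TGWA_kernel U X1p X1m X2p X2m a.

End KleinTGWA.

(* The two presentations impose the same relations once H is identified with U:
   [H, X] = a X is equivalent to X r(H) = r(H - a) X for every polynomial r.
   Hence the two presented algebras are isomorphic, and it remains to show that
   the ideal of the TGWA quotient is the H-torsion ideal {a | f(H) a = 0, f <> 0}.
   If a graded ideal J meets R = F[U] trivially, a homogeneous element of J can be
   multiplied by generators down to degree 0, where homogeneous elements lie in R
   (by a normal form for monomials) and so vanish; as the products X_i^+ X_i^- and
   X_i^- X_i^+ are nonzero elements of R, this makes the element torsion.
   Conversely the torsion ideal is graded, because the automorphisms scaling
   X_i^+ by mu and X_i^- by mu^-1 separate homogeneous components, and it meets
   R trivially because R embeds into the nonzero algebra A. *)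
From HB Require Import structures.
From mathcomp Require Import all_boot all_order all_algebra.
From mathcomp Require Import reals complex boolp.
From mathcomp Require Import zify ring.
Set Implicit Arguments. Unset Strict Implicit. Unset Printing Implicit Defensive.
Import GRing.Theory Num.Theory.
Local Open Scope ring_scope.

Section PolyEval.
Variable F : fieldType.
Implicit Types (A B : algType F) (p q r : {poly F}) (c : F).

Lemma pevalD A p q (a : A) : peval (p + q) a = peval p a + peval q a.
Proof. exact: rmorphD. Qed.

Lemma pevalM A p q (a : A) : peval (p * q) a = peval p a * peval q a.
Proof. exact: rmorphM. Qed.

Lemma peval0 A (a : A) : peval 0 a = 0.
Proof. exact: rmorph0. Qed.

Lemma peval1 A (a : A) : peval 1 a = 1.
Proof. exact: rmorph1. Qed.

Lemma pevalC A c (a : A) : peval c%:P a = c%:A.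
Proof. exact: horner_algC. Qed.

Lemma pevalZ A c p (a : A) : peval (c *: p) a = c *: peval p a.
Proof. by rewrite -mul_polyC pevalM pevalC mulr_algl. Qed.

Lemma pevalX A (a : A) : peval 'X a = a.
Proof. exact: horner_algX. Qed.

(* Restated for the [lrmorphism] coercion: rewriting with [rmorphM] and its
   siblings leaves the [rmorphism] coercion, which no longer matches lemmas
   about [lrmorphism]s. *)
Lemma lrmorph0 A B (f : {lrmorphism A -> B}) : f 0 = 0.
Proof. exact: rmorph0. Qed.

Lemma lrmorph1 A B (f : {lrmorphism A -> B}) : f 1 = 1.
Proof. exact: rmorph1. Qed.

Lemma lrmorphD A B (f : {lrmorphism A -> B}) : {morph f : x y / x + y}.
Proof. exact: rmorphD. Qed.

Lemma lrmorphB A B (f : {lrmorphism A -> B}) : {morph f : x y / x - y}.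
Proof. exact: rmorphB. Qed.

Lemma lrmorphM A B (f : {lrmorphism A -> B}) : {morph f : x y / x * y}.
Proof. exact: rmorphM. Qed.

Lemma lrmorphZ A B (f : {lrmorphism A -> B}) c : {morph f : x / c *: x}.
Proof. exact: linearZ. Qed.

Lemma lrmorph_peval A B (f : {lrmorphism A -> B}) p a :
  f (peval p a) = peval p (f a).
Proof.
elim/poly_ind: p => [|p c IH]; first by rewrite !peval0 lrmorph0.
by rewrite !pevalD !pevalM !pevalC !pevalX lrmorphD lrmorphM IH rmorph_alg.
Qed.

Lemma peval_comp A p q (a : A) : peval (p \Po q) a = peval p (peval q a).
Proof.
elim/poly_ind: p => [|p c IH]; first by rewrite comp_poly0 !peval0.
by rewrite comp_polyD comp_polyM comp_polyX comp_polyC !pevalD !pevalM IH !pevalC pevalX.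
Qed.

Lemma peval_shiftp A c p (a : A) : peval (shiftp c p) a = peval p (a - c%:A).
Proof. by rewrite peval_comp /peval rmorphB /= horner_algX horner_algC. Qed.

Lemma shiftp_eq0 c p : (shiftp c p == 0) = (p == 0).
Proof. by rewrite comp_poly_eq0 // size_XsubC. Qed.

Lemma comm_peval A (x h : A) c : x * h = (h - c%:A) * x ->
  forall r, x * peval r h = peval (shiftp c r) h * x.
Proof.
move=> xh r; rewrite peval_shiftp.
elim/poly_ind: r => [|r k IH]; first by rewrite !peval0 mulr0 mul0r.
rewrite !pevalD !pevalM !pevalC !pevalX mulrDr mulrA IH -mulrA xh.
by rewrite mulrA mulr_algr mulrDl mulr_algl.
Qed.

End PolyEval.

Section Torsion.
Variable F : fieldType.
Implicit Types (A B : algType F) (c : F).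

Definition torsion A (h a : A) : Prop :=
  exists f : {poly F}, f != 0 /\ peval f h * a = 0.

Lemma torsion_lrmorph A B (phi : {lrmorphism A -> B}) (psi : B -> A) (h a : A) :
  cancel phi psi -> torsion h a <-> torsion (phi h) (phi a).
Proof.
move=> phiK; split=> -[f [f_neq0 fa]]; exists f; split=> //.
  by rewrite -lrmorph_peval -lrmorphM fa lrmorph0.
by apply: (can_inj phiK); rewrite lrmorphM lrmorph_peval fa lrmorph0.
Qed.

Lemma torsion0 A (h : A) : torsion h 0.
Proof. by exists 1; rewrite oner_neq0 mulr0. Qed.

Lemma torsionD A (h a b : A) : torsion h a -> torsion h b -> torsion h (a + b).
Proof.
move=> [f [f_neq0 fa]] [g [g_neq0 gb]]; exists (f * g); split; first by rewrite mulf_neq0.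
by rewrite mulrDr {1}mulrC !pevalM -!mulrA fa gb !mulr0 addr0.
Qed.

Lemma torsionZ A (h a : A) c : torsion h a -> torsion h (c *: a).
Proof. by move=> [f [f_neq0 fa]]; exists f; rewrite -scalerAr fa scaler0. Qed.

Lemma torsionMr A (h a b : A) : torsion h a -> torsion h (a * b).
Proof. by move=> [f [f_neq0 fa]]; exists f; rewrite mulrA fa mul0r. Qed.

Lemma torsion_sum A (h : A) (I : eqType) (s : seq I) (G : I -> A) :
  (forall i, i \in s -> torsion h (G i)) -> torsion h (\sum_(i <- s) G i).
Proof.
move=> s_tor; rewrite big_seq; apply: big_ind => //; [exact: torsion0 | exact: torsionD].
Qed.

Lemma torsion_skew_mull A (h x a : A) c :
  x * h = (h - c%:A) * x -> torsion h a -> torsion h (x * a).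
Proof.
move=> xh [f [f_neq0 fa]]; exists (shiftp c f); rewrite shiftp_eq0.
by rewrite mulrA -(comm_peval xh) -mulrA fa mulr0.
Qed.

Lemma torsion_skew_cancel A (h x y a : A) c t : t != 0 ->
  y * h = (h - c%:A) * y -> y * x = peval t h -> torsion h (x * a) -> torsion h a.
Proof.
move=> t_neq0 yh yx /(torsion_skew_mull yh) [f [f_neq0 fyxa]].
by exists (f * t); rewrite mulf_neq0 // pevalM -mulrA -yx -mulrA.
Qed.

End Torsion.

Section Presentation.
Variable F : fieldType.
Implicit Types A B : algType F.

(* [KFP_presentation] and [TGWA_presentation] unfold to [presents] of their relations. *)
Definition algrel := forall B : algType F, B -> B -> B -> B -> B -> Prop.

Definition presents (rel : algrel) A (h x1 x2 x3 x4 : A) : Prop :=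
  rel A h x1 x2 x3 x4 /\
  forall B (h' x1' x2' x3' x4' : B), rel B h' x1' x2' x3' x4' ->
    (exists f : {lrmorphism A -> B},
        [/\ f h = h', f x1 = x1', f x2 = x2', f x3 = x3' & f x4 = x4'])
    /\ (forall f g : {lrmorphism A -> B},
          f h = g h -> f x1 = g x1 -> f x2 = g x2 -> f x3 = g x3 -> f x4 = g x4 ->
          f =1 g).

Definition inj_reflected (rel : algrel) : Prop :=
  forall B B' (f : {lrmorphism B -> B'}) (k z1 z2 z3 z4 : B), injective f ->
    rel B' (f k) (f z1) (f z2) (f z3) (f z4) -> rel B k z1 z2 z3 z4.

Lemma presents_endo_id (rel : algrel) A (h x1 x2 x3 x4 : A) (f : {lrmorphism A -> A}) :
  presents rel h x1 x2 x3 x4 ->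
  f h = h -> f x1 = x1 -> f x2 = x2 -> f x3 = x3 -> f x4 = x4 -> f =1 id.
Proof. by move=> [relA univA]; apply: ((univA _ _ _ _ _ _ relA).2 f idfun). Qed.

Lemma presents_iso (rel rel' : algrel) A A' (h x1 x2 x3 x4 : A) (h' y1 y2 y3 y4 : A') :
  (forall B (k z1 z2 z3 z4 : B), rel B k z1 z2 z3 z4 <-> rel' B k z1 z2 z3 z4) ->
  presents rel h x1 x2 x3 x4 -> presents rel' h' y1 y2 y3 y4 ->
  exists (phi : {lrmorphism A -> A'}) (psi : {lrmorphism A' -> A}),
    [/\ cancel phi psi, cancel psi phi & phi h = h'].
Proof.
move=> relE presA presA'.
have [[phi [phih phi1 phi2 phi3 phi4]] _] :=
  presA.2 _ _ _ _ _ _ (proj2 (relE _ _ _ _ _ _) presA'.1).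
have [[psi [psih psi1 psi2 psi3 psi4]] _] :=
  presA'.2 _ _ _ _ _ _ (proj1 (relE _ _ _ _ _ _) presA.1).
have phiK := presents_endo_id (f := psi \o phi) presA.
have psiK := presents_endo_id (f := phi \o psi) presA'.
by exists phi, psi; split=> //; [apply: phiK | apply: psiK];
  rewrite /= ?phih ?phi1 ?phi2 ?phi3 ?phi4 ?psih ?psi1 ?psi2 ?psi3 ?psi4.
Qed.

End Presentation.

Section Words.
Variable F : fieldType.
Variables (A : algType F) (u x1 x2 x3 x4 : A).
Local Notation gen := (tgen_val u x1 x2 x3 x4).
Local Notation word := (word_val u x1 x2 x3 x4).
Implicit Types (w : seq tgen) (l : seq (F * seq tgen)).

Lemma word_val_nil : word [::] = 1.
Proof. exact: big_nil. Qed.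

Lemma word_val_cons x w : word (x :: w) = gen x * word w.
Proof. exact: big_cons. Qed.

Lemma word_val_cat w1 w2 : word (w1 ++ w2) = word w1 * word w2.
Proof. exact: big_cat. Qed.

Lemma word_deg_cons x w : word_deg (x :: w) =
  ((tgen_deg x).1 + (word_deg w).1, (tgen_deg x).2 + (word_deg w).2).
Proof. by []. Qed.

Definition lincomb l : A := \sum_(p <- l) p.1 *: word p.2.

Definition deg_part (g : int * int) l := [seq p <- l | word_deg p.2 == g].

Lemma lincomb_nil : lincomb [::] = 0.
Proof. exact: big_nil. Qed.

Lemma lincomb_cons p l : lincomb (p :: l) = p.1 *: word p.2 + lincomb l.
Proof. exact: big_cons. Qed.

Lemma lincomb_cat l1 l2 : lincomb (l1 ++ l2) = lincomb l1 + lincomb l2.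
Proof. exact: big_cat. Qed.

Lemma lincomb_gen x : lincomb [:: (1, [:: x])] = gen x.
Proof. by rewrite lincomb_cons lincomb_nil addr0 scale1r word_val_cons word_val_nil mulr1. Qed.

Lemma lincomb_scale c l : lincomb [seq (c * p.1, p.2) | p <- l] = c *: lincomb l.
Proof. by rewrite /lincomb big_map scaler_sumr; apply: eq_bigr => p _; rewrite scalerA. Qed.

Lemma lincomb_mul l1 l2 :
  lincomb [seq (p.1 * q.1, p.2 ++ q.2) | p <- l1, q <- l2] = lincomb l1 * lincomb l2.
Proof.
rewrite /lincomb big_allpairs_dep mulr_suml; apply: eq_bigr => p _.
rewrite mulr_sumr; apply: eq_bigr => q _.
by rewrite word_val_cat -scalerAl -scalerAr scalerA.
Qed.

Lemma gen_mul_lincomb x l : gen x * lincomb l = lincomb [seq (p.1, x :: p.2) | p <- l].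
Proof.
rewrite /lincomb big_map mulr_sumr; apply: eq_bigr => p _.
by rewrite -scalerAr word_val_cons.
Qed.

Lemma all_word_deg_in_degs l :
  all (fun p => word_deg p.2 \in undup [seq word_deg p.2 | p <- l]) l.
Proof.
rewrite -(all_map (fun p => word_deg p.2) (fun g => g \in undup _)).
by apply/allP => g; rewrite mem_undup.
Qed.

Lemma lincomb_deg_parts (S : seq (int * int)) l : uniq S ->
  all (fun p => word_deg p.2 \in S) l -> lincomb l = \sum_(g <- S) lincomb (deg_part g l).
Proof.
move=> S_uniq; elim: l => [|p l IH] /=.
  by rewrite lincomb_nil big1 // => g _; rewrite lincomb_nil.
move=> /andP[pS lS].
have partE g : lincomb (deg_part g (p :: l)) =
    (if word_deg p.2 == g then p.1 *: word p.2 else 0) + lincomb (deg_part g l).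
  by rewrite /deg_part /=; case: ifP; rewrite ?lincomb_cons ?add0r.
rewrite (eq_bigr _ (fun g _ => partE g)) big_split /= -IH // lincomb_cons.
rewrite (bigD1_seq (word_deg p.2)) //= eqxx big1 ?addr0 // => g.
by rewrite eq_sym => /negbTE ->.
Qed.

Lemma homogeneousP g a : homogeneous u x1 x2 x3 x4 g a <->
  exists2 l, all (fun p => word_deg p.2 == g) l & a = lincomb l.
Proof.
split=> [[ws [cs [ws_deg ->]]] | [l l_deg ->]].
  exists [seq (cs`_k, nth [::] ws k) | k <- iota 0 (size ws)].
    rewrite all_map; apply/allP => k; rewrite mem_iota add0n => /andP[_ k_lt] /=.
    by move/all_nthP: ws_deg; apply.
  rewrite /lincomb big_map -(big_mkord xpredT (fun k => cs`_k *: word (nth [::] ws k))).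
  by rewrite /index_iota subn0.
exists (map snd l), (map fst l); split; first by rewrite all_map.
rewrite /lincomb (big_nth (0, [::])) big_mkord size_map.
by apply: eq_bigr => k _; rewrite (nth_map (0, [::]) 0) // (nth_map (0, [::]) [::]).
Qed.

Definition spanned : {pred A} := fun a => `[< exists l, a = lincomb l >].

Lemma spanned_subalg_closed : GRing.subsemialg_closed spanned.
Proof.
have spannedP a : reflect (exists l, a = lincomb l) (a \in spanned) by exact: asboolP.
split.
- apply/spannedP; exists [:: (1, [::])].
  by rewrite lincomb_cons lincomb_nil addr0 scale1r word_val_nil.
- split=> [|a b /spannedP[l1 ->] /spannedP[l2 ->]]; apply/spannedP.
    by exists [::]; rewrite lincomb_nil.
  by exists (l1 ++ l2); rewrite lincomb_cat.
- move=> c a /spannedP[l ->]; apply/spannedP.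
  by exists [seq (c * p.1, p.2) | p <- l]; rewrite lincomb_scale.
- move=> a b /spannedP[l1 ->] /spannedP[l2 ->]; apply/spannedP.
  by exists [seq (p.1 * q.1, p.2 ++ q.2) | p <- l1, q <- l2]; rewrite lincomb_mul.
Qed.

Record spanned_subalg := SpannedSubalg { spanned_val : A; _ : spanned_val \in spanned }.
HB.instance Definition _ := [isSub for spanned_val].
HB.instance Definition _ := [Choice of spanned_subalg by <:].
HB.instance Definition _ :=
  GRing.SubChoice_isSubAlgebra.Build F A spanned spanned_subalg spanned_subalg_closed.

Definition spanned_incl (a : spanned_subalg) : A := val a.
HB.instance Definition _ := GRing.RMorphism.copy spanned_incl val.
HB.instance Definition _ := GRing.Linear.copy spanned_incl val.

Lemma presents_spanned (rel : algrel F) : inj_reflected rel ->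
  presents rel u x1 x2 x3 x4 -> forall a, exists l, a = lincomb l.
Proof.
move=> rel_inj presA a.
have gen_spanned x : gen x \in spanned.
  by apply/asboolP; exists [:: (1, [:: x])]; rewrite lincomb_gen.
pose sgen x := SpannedSubalg (gen_spanned x).
have rel_sub : rel _ (sgen GU) (sgen GX1p) (sgen GX1m) (sgen GX2p) (sgen GX2m).
  exact: (rel_inj _ _ spanned_incl (sgen GU) (sgen GX1p) (sgen GX1m) (sgen GX2p) (sgen GX2m)
    val_inj presA.1).
have [[f [fu f1 f2 f3 f4]] _] := presA.2 _ _ _ _ _ _ rel_sub.
have valfK := presents_endo_id (f := spanned_incl \o f) presA.
have <- : spanned_incl (f a) = a by apply: valfK; rewrite /= ?fu ?f1 ?f2 ?f3 ?f4.
exact/asboolP/(valP (f a)).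
Qed.

End Words.

Section Relations.
Variable F : fieldType.
Variables (a1 a2 : F) (p1 p2 : {poly F}).
Implicit Types A B : algType F.

Lemma bracket_comm A (h x : A) c :
  h * x - x * h = c *: x <-> x * h = (h - c%:A) * x.
Proof.
by rewrite mulrBl mulr_algl; split=> E; [rewrite -E | rewrite E]; rewrite opprB addrC subrK.
Qed.

Lemma bracket_comm_peval A (h x : A) c :
  h * x - x * h = c *: x <-> forall r, x * peval r h = peval (shiftp c r) h * x.
Proof.
rewrite bracket_comm; split=> [/comm_peval // | /(_ 'X)].
by rewrite peval_shiftp !pevalX.
Qed.

Lemma KFP_TGWA_rel A (h x1p x1m x2p x2m : A) :
  KFP_rel a1 a2 p1 p2 h x1p x1m x2p x2m <-> TGWA_rel a1 a2 p1 p2 h x1p x1m x2p x2m.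
Proof.
rewrite /KFP_rel /TGWA_rel -!scaleNr !peval_shiftp -!(scaleNr _ 1) !opprK.
split=> [[E1p [E1m [E2p [E2m E]]]] | [Er E]].
  by split=> // r; split; move: r; apply/bracket_comm_peval.
by do 4!(split; first by apply/bracket_comm_peval => r; case: (Er r)).
Qed.

Lemma TGWA_rel_inj_reflected : inj_reflected (@TGWA_rel F a1 a2 p1 p2).
Proof.
move=> B B' f k z1 z2 z3 z4 f_inj [Er [E1 [E2 [E3 [E4 [E5 E6]]]]]].
split; first by move=> r; have [E1p E1m E2p E2m] := Er r; split; apply: f_inj;
  rewrite !lrmorphM !lrmorph_peval.
by repeat split; apply: f_inj; rewrite lrmorphM ?lrmorphM ?lrmorph_peval.
Qed.

Lemma TGWA_rel_scale A (u y1p y1m y2p y2m : A) (c d : F) : c != 0 -> d != 0 ->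
  TGWA_rel a1 a2 p1 p2 u y1p y1m y2p y2m ->
  TGWA_rel a1 a2 p1 p2 u (c *: y1p) (c^-1 *: y1m) (d *: y2p) (d^-1 *: y2m).
Proof.
move=> c_neq0 d_neq0 [Er [E1 [E2 [E3 [E4 [E5 E6]]]]]].
split; first by move=> r; have [G1 G2 G3 G4] := Er r; split;
  rewrite -scalerAl ?G1 ?G2 ?G3 ?G4 scalerAr.
rewrite -!scalerAl -!scalerAr !scalerA !mulfV // !mulVf // !scale1r E5 E6.
by rewrite [d^-1 * c]mulrC [c^-1 * d]mulrC; repeat split.
Qed.

End Relations.

Section TGWAStructure.
Variable F : fieldType.
Variables (a1 a2 : F) (t1 t2 : {poly F}).
Hypotheses (t1_neq0 : t1 != 0) (t2_neq0 : t2 != 0).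
Variables (Tt : algType F) (U Y1p Y1m Y2p Y2m : Tt).
Hypothesis presT : TGWA_presentation a1 a2 t1 t2 U Y1p Y1m Y2p Y2m.
Local Notation gen := (tgen_val U Y1p Y1m Y2p Y2m).
Local Notation word := (word_val U Y1p Y1m Y2p Y2m).
Local Notation lincomb := (lincomb U Y1p Y1m Y2p Y2m).
Local Notation homogeneous := (homogeneous U Y1p Y1m Y2p Y2m).

Lemma TGWA_spanned a : exists l, a = lincomb l.
Proof.
exact: presents_spanned (@TGWA_rel_inj_reflected F a1 a2 t1 t2)
  (presT : presents (@TGWA_rel F a1 a2 t1 t2) U Y1p Y1m Y2p Y2m) a.
Qed.

Definition gen_shift (x : tgen) : F :=
  match x with GU => 0 | GX1p => a1 | GX1m => - a1 | GX2p => a2 | GX2m => - a2 end.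

Lemma gen_skew x : gen x * U = (U - (gen_shift x)%:A) * gen x.
Proof.
have [E1p E1m E2p E2m] := presT.1.1 'X.
rewrite !peval_shiftp !pevalX in E1p E1m E2p E2m.
by case: x => //=; rewrite scale0r subr0.
Qed.

Lemma Y1pY1m : Y1p * Y1m = peval (shiftp (a1 / 2%:R) t1) U.
Proof. by case: presT => -[_ []]. Qed.
Lemma Y1mY1p : Y1m * Y1p = peval (shiftp (- (a1 / 2%:R)) t1) U.
Proof. by case: presT => -[_ [_ []]]. Qed.
Lemma Y2pY2m : Y2p * Y2m = peval (shiftp (a2 / 2%:R) t2) U.
Proof. by case: presT => -[_ [_ [_ []]]]. Qed.
Lemma Y2mY2p : Y2m * Y2p = peval (shiftp (- (a2 / 2%:R)) t2) U.
Proof. by case: presT => -[_ [_ [_ [_ []]]]]. Qed.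
Lemma comm_Y1p_Y2m : GRing.comm Y1p Y2m.
Proof. by case: presT => -[_ [_ [_ [_ [_ []]]]]]. Qed.
Lemma comm_Y1m_Y2p : GRing.comm Y1m Y2p.
Proof. by case: presT => -[_ [_ [_ [_ [_ []]]]]]. Qed.

Lemma torsion_mull a b : torsion U b -> torsion U (a * b).
Proof.
move=> b_tor; have [l ->] := TGWA_spanned a.
elim: l => [|p l IH]; first by rewrite lincomb_nil mul0r; apply: torsion0.
rewrite lincomb_cons mulrDl -scalerAl; apply: torsionD => //; apply: torsionZ.
elim: p.2 => [|x w IHw]; first by rewrite word_val_nil mul1r.
by rewrite word_val_cons -mulrA; apply: torsion_skew_mull (gen_skew x) _.
Qed.

Lemma torsion_ideal : is_ideal (torsion U).
Proof.
split; [exact: torsion0 | exact: torsionD | by move=> c a; apply: torsionZ |].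
by move=> a b b_tor; split; [exact: torsion_mull | exact: torsionMr].
Qed.

Definition normalizes_R (x : Tt) := forall r, exists r', x * peval r U = peval r' U * x.

Lemma normalizes_R1 : normalizes_R 1.
Proof. by move=> r; exists r; rewrite mul1r mulr1. Qed.

Lemma normalizes_RM x y : normalizes_R x -> normalizes_R y -> normalizes_R (x * y).
Proof.
move=> xR yR r; have [r1 yr] := yR r; have [r2 xr] := xR r1.
by exists r2; rewrite -mulrA yr mulrA xr mulrA.
Qed.

Lemma normalizes_RX x n : normalizes_R x -> normalizes_R (x ^+ n).
Proof.
move=> xR; elim: n => [|n IH]; rewrite ?expr0 ?exprS;
  [exact: normalizes_R1 | exact: normalizes_RM].
Qed.

Lemma normalizes_R_gen x : normalizes_R (gen x).
Proof. by move=> r; exists (shiftp (gen_shift x) r); apply: comm_peval (gen_skew x) r. Qed.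

(* Normal form of monomials: up to a left factor in R, every word is
   Y2^d0 (Y1 Y2^d1) ... (Y1 Y2^dk) with all the Y1 of the same sign, where Y2^d
   is Y2p^d or Y2m^-d. A Y1p and a Y1m on either side of a power of Y2 cancel
   into R, because Y1p commutes with Y2m and Y1m with Y2p. *)
Definition Y2_exp (d : int) : Tt :=
  match d with Posz n => Y2p ^+ n | Negz n => Y2m ^+ n.+1 end.

Definition Y1 (b : bool) : Tt := if b then Y1p else Y1m.

Fixpoint Y1_chain (b : bool) (ds : seq int) : Tt :=
  if ds is d :: ds' then Y1 b * Y2_exp d * Y1_chain b ds' else 1.

Lemma Y2_exp0 : Y2_exp 0 = 1.
Proof. exact: expr0. Qed.

Lemma normalizes_R_Y2_exp d : normalizes_R (Y2_exp d).
Proof.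
by case: d => n; apply: normalizes_RX;
  [exact: (normalizes_R_gen GX2p) | exact: (normalizes_R_gen GX2m)].
Qed.

Lemma Y2p_mul_Y2_exp d : exists r, Y2p * Y2_exp d = peval r U * Y2_exp (d + 1).
Proof.
case: d => [n|n].
  have -> : Posz n + 1 = n.+1 by lia.
  by exists 1; rewrite peval1 mul1r /= exprS.
exists (shiftp (a2 / 2%:R) t2); rewrite /= exprS mulrA Y2pY2m; congr (_ * _).
case: n => [|n]; first by have -> : Negz 0 + 1 = 0 by rewrite NegzE; lia.
by have -> : Negz n.+1 + 1 = Negz n by rewrite !NegzE; lia.
Qed.

Lemma Y2m_mul_Y2_exp d : exists r, Y2m * Y2_exp d = peval r U * Y2_exp (d - 1).
Proof.
case: d => [[|n]|n].
- by exists 1; rewrite peval1 mul1r /= expr1 mulr1.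
- exists (shiftp (- (a2 / 2%:R)) t2); rewrite /= exprS mulrA Y2mY2p.
  by rewrite subn1.
- have -> : Negz n - 1 = Negz n.+1 by rewrite !NegzE; lia.
  by exists 1; rewrite peval1 mul1r /= -exprS.
Qed.

Lemma Y2_exp_mul d e : exists r, Y2_exp d * Y2_exp e = peval r U * Y2_exp (d + e).
Proof.
have step y k (yR : normalizes_R y) :
    (forall e, exists r, y * Y2_exp e = peval r U * Y2_exp (e + k)) ->
    forall n e, exists r, y ^+ n * Y2_exp e = peval r U * Y2_exp (e + n%:Z * k).
  move=> y_mul; elim=> [|n IH] e'.
    by exists 1; rewrite expr0 mul1r peval1 mul1r mul0r addr0.
  have [r1 E1] := IH e'; have [r2 E2] := y_mul (e' + n%:Z * k); have [r3 E3] := yR r1.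
  exists (r3 * r2); rewrite exprS -mulrA E1 mulrA E3 -mulrA E2 mulrA -pevalM.
  by congr (_ * Y2_exp _); lia.
case: d => n.
  have [r E] := step _ 1 (normalizes_R_gen GX2p) Y2p_mul_Y2_exp n e.
  by exists r; rewrite E; congr (_ * Y2_exp _); lia.
have [r E] := step _ (-1) (normalizes_R_gen GX2m) Y2m_mul_Y2_exp n.+1 e.
by exists r; rewrite /= E; congr (_ * Y2_exp _); rewrite NegzE; lia.
Qed.

Lemma Y1_cancel b d : exists r, Y1 (~~ b) * Y2_exp d * Y1 b = peval r U * Y2_exp d.
Proof.
have c1m n := commrX n comm_Y1m_Y2p; have c1p n := commrX n comm_Y1p_Y2m.
case: b; case: d => n /=.
- have [r E] := normalizes_R_Y2_exp n (shiftp (- (a1 / 2%:R)) t1).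
  by exists r; rewrite c1m -mulrA Y1mY1p; exact: E.
- by exists (shiftp (- (a1 / 2%:R)) t1); rewrite -mulrA -c1p mulrA Y1mY1p.
- by exists (shiftp (a1 / 2%:R) t1); rewrite -mulrA -c1m mulrA Y1pY1m.
- have [r E] := normalizes_R_Y2_exp (Negz n) (shiftp (a1 / 2%:R) t1).
  by exists r; rewrite c1p -mulrA Y1pY1m; exact: E.
Qed.

Definition bsign (b : bool) : int := if b then 1 else -1.

Definition nf_val b d0 ds := Y2_exp d0 * Y1_chain b ds.

Definition nf_deg b d0 ds : int * int :=
  (bsign b * (size ds)%:Z, d0 + \sum_(d <- ds) d).

Definition normal_form (g : int * int) (a : Tt) :=
  exists r b d0 ds, a = peval r U * nf_val b d0 ds /\ g = nf_deg b d0 ds.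

Lemma Y1_mul_nf_val b' b d0 ds :
  normal_form (bsign b' + (nf_deg b d0 ds).1, (nf_deg b d0 ds).2) (Y1 b' * nf_val b d0 ds).
Proof.
rewrite /normal_form /nf_val /nf_deg; case: ds => [|d1 ds].
  exists 1, b', 0, [:: d0]; rewrite peval1 Y2_exp0 /= !mul1r !mulr1 !big_cons !big_nil.
  by split=> //; congr (_, _); case: b; case: b' => /=; lia.
have [<- | /negPf nb] := eqVneq b' b.
  exists 1, b', 0, [:: d0, d1 & ds]; rewrite peval1 Y2_exp0 /= !mul1r mulrA !big_cons.
  by split=> //; congr (_, _); case: b' => /=; lia.
have {nb}-> : b' = ~~ b by move: nb; case: b; case: b'.
have [r E] := Y1_cancel b d0; have [r' E'] := Y2_exp_mul d0 d1.
exists (r * r'), b, (d0 + d1), ds; rewrite /= !big_cons; split.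
  by rewrite !mulrA E -(mulrA (peval r U)) E' pevalM !mulrA.
by congr (_, _); clear E; case: b => /=; lia.
Qed.

Lemma gen_mul_nf_val x b d0 ds :
  normal_form ((tgen_deg x).1 + (nf_deg b d0 ds).1, (tgen_deg x).2 + (nf_deg b d0 ds).2)
    (gen x * nf_val b d0 ds).
Proof.
case: x; rewrite /= ?add0r.
- by exists 'X, b, d0, ds; rewrite pevalX.
- exact: (Y1_mul_nf_val true).
- exact: (Y1_mul_nf_val false).
- have [r E] := Y2p_mul_Y2_exp d0; exists r, b, (d0 + 1), ds; rewrite /nf_val mulrA E -mulrA.
  by split=> //; rewrite /nf_deg; congr (_, _); ring.
- have [r E] := Y2m_mul_Y2_exp d0; exists r, b, (d0 - 1), ds; rewrite /nf_val mulrA E -mulrA.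
  by split=> //; rewrite /nf_deg; congr (_, _); ring.
Qed.

Lemma normal_form_gen_mull x g a : normal_form g a ->
  normal_form ((tgen_deg x).1 + g.1, (tgen_deg x).2 + g.2) (gen x * a).
Proof.
move=> [r [b [d0 [ds [-> ->]]]]].
have [r1 E1] := normalizes_R_gen x r.
have [r2 [b' [d0' [ds' [E2 ->]]]]] := gen_mul_nf_val x b d0 ds.
by exists (r1 * r2), b', d0', ds'; rewrite mulrA E1 -mulrA E2 pevalM mulrA.
Qed.

Lemma word_normal_form w : normal_form (word_deg w) (word w).
Proof.
elim: w => [|x w IH]; last by rewrite word_val_cons word_deg_cons; apply: normal_form_gen_mull.
exists 1, true, 0, [::]; rewrite word_val_nil peval1 /nf_val Y2_exp0 !mul1r.
by rewrite /nf_deg big_nil.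
Qed.

Lemma normal_form_deg0 a : normal_form (0, 0) a -> exists r, a = peval r U.
Proof.
move=> [r [b [d0 [ds [-> [deg1 deg2]]]]]].
have ds0 : ds = [::] by apply/eqP; rewrite -size_eq0; move: deg1; case: b => /=; lia.
move: deg2; rewrite ds0 big_nil addr0 => <-.
by exists r; rewrite /nf_val Y2_exp0 mulr1 /= mulr1.
Qed.

Lemma homogeneous_deg0_in_R a : homogeneous (0, 0) a -> exists r, a = peval r U.
Proof.
move=> /homogeneousP[l]; elim: l a => [|p l IH] a /=.
  by move=> _ ->; exists 0; rewrite lincomb_nil peval0.
move=> /andP[/eqP p_deg l_deg] ->; rewrite lincomb_cons.
have [r ->] := IH _ l_deg erefl.
have := word_normal_form p.2; rewrite p_deg => /normal_form_deg0[r' ->].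
by exists (p.1 *: r' + r); rewrite pevalD pevalZ.
Qed.

Lemma homogeneous_gen_mull x g a : homogeneous g a ->
  homogeneous ((tgen_deg x).1 + g.1, (tgen_deg x).2 + g.2) (gen x * a).
Proof.
move=> /homogeneousP[l l_deg ->]; apply/homogeneousP.
exists [seq (p.1, x :: p.2) | p <- l]; last exact: gen_mul_lincomb.
by rewrite all_map; apply: sub_all l_deg => p /eqP p_deg; rewrite /= -p_deg.
Qed.

Lemma deg_reducing_gen (g : int * int) : g != (0, 0) -> exists x y t, [/\ t != 0,
  gen y * gen x = peval t U &
  (absz ((tgen_deg x).1 + g.1)%R + absz ((tgen_deg x).2 + g.2)%R < absz g.1 + absz g.2)%N].
Proof.
case: g => g1 g2 g_neq0.
have [g1_gt0|g1_lt0|g1_0] := ltrgtP 0 g1.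
- by exists GX1m, GX1p, (shiftp (a1 / 2%:R) t1); rewrite shiftp_eq0 Y1pY1m /=; split=> //; lia.
- by exists GX1p, GX1m, (shiftp (- (a1 / 2%:R)) t1); rewrite shiftp_eq0 Y1mY1p /=; split=> //; lia.
have [g2_gt0|g2_lt0|g2_0] := ltrgtP 0 g2.
- by exists GX2m, GX2p, (shiftp (a2 / 2%:R) t2); rewrite shiftp_eq0 Y2pY2m /=; split=> //; lia.
- by exists GX2p, GX2m, (shiftp (- (a2 / 2%:R)) t2); rewrite shiftp_eq0 Y2mY2p /=; split=> //; lia.
by move: g_neq0; rewrite -g1_0 -g2_0 eqxx.
Qed.

Lemma graded_ideal_homogeneous_torsion (J : Tt -> Prop) :
  is_ideal J -> meets_R_trivially U J ->
  forall g a, J a -> homogeneous g a -> torsion U a.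
Proof.
move=> [_ _ _ J_mul] J_R g a; have [n] := ubnP (absz g.1 + absz g.2)%N.
elim: n => // n IH in g a *; move=> lt_g Ja a_hom.
have [g0 | g_neq0] := eqVneq g (0, 0).
  move: a_hom; rewrite g0 => /homogeneous_deg0_in_R[r a_r].
  by move: Ja; rewrite a_r => /J_R ->; apply: torsion0.
have [x [y [t [t_neq0 yx lt_xg]]]] := deg_reducing_gen g_neq0.
apply: (torsion_skew_cancel t_neq0 (gen_skew y) yx).
apply: (IH _ _ _ (J_mul (gen x) a Ja).1 (homogeneous_gen_mull x a_hom)).
by rewrite ltnS in lt_g; apply: leq_trans lt_xg lt_g.
Qed.

Lemma TGWA_kernel_torsion a : TGWA_kernel U Y1p Y1m Y2p Y2m a -> torsion U a.
Proof.
move=> [s [-> s_J]]; apply: torsion_sum => b /s_J [J [[J_ideal J_graded] J_R Jb]].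
have [S [c [_ [-> S_c]]]] := J_graded b Jb.
apply: torsion_sum => g /S_c [Jc c_hom].
exact: graded_ideal_homogeneous_torsion J_ideal J_R _ _ Jc c_hom.
Qed.

End TGWAStructure.

Section WeightedSums.
Variable F : numFieldType.

Lemma expfz_2_inj : injective (fun m : int => (2%:R : F) ^ m).
Proof.
move=> m n /= E; have two_neq0 : (2%:R : F) != 0 by rewrite pnatr_eq0.
have : (2%:R : F) ^ (m - n) = 1.
  by apply: (mulIf (expfz_neq0 n two_neq0)); rewrite -expfzDr // subrK mul1r.
by move/eqP; rewrite pexprz_eq1 ?ler0n // pnatr_eq1 orbF subr_eq0 => /eqP.
Qed.

Lemma weighted_sums_eq0 (V : lmodType F) (K : eqType) (s : seq K) (e : K -> int)
    (c : K -> V) :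
  uniq (map e s) -> (forall mu : F, mu != 0 -> \sum_(k <- s) mu ^ (e k) *: c k = 0) ->
  forall k, k \in s -> c k = 0.
Proof.
elim: s c => [|k0 s IH] c //= /andP[k0_ns s_uniq] sums0.
have two_neq0 : (2%:R : F) != 0 by rewrite pnatr_eq0.
(* The sum at [2 mu] minus [2 ^ e k0] times the sum at [mu] no longer involves [c k0]. *)
have sums0' mu : mu != 0 ->
    \sum_(k <- s) mu ^ (e k) *: ((2%:R ^ (e k) - 2%:R ^ (e k0)) *: c k) = 0.
  move=> mu_neq0; have := sums0 _ mu_neq0; have := sums0 _ (mulf_neq0 two_neq0 mu_neq0).
  rewrite !big_cons => sum2mu summu.
  have : (2%:R * mu) ^ (e k0) *: c k0 + \sum_(k <- s) (2%:R * mu) ^ e k *: c k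
      - 2%:R ^ (e k0) *: (mu ^ e k0 *: c k0 + \sum_(k <- s) mu ^ e k *: c k) = 0.
    by rewrite sum2mu summu scaler0 subr0.
  rewrite scalerDr expfzMl scalerA opprD addrACA subrr add0r scaler_sumr -sumrB.
  apply: etrans; apply: eq_bigr => k _; rewrite expfzMl !scalerA -scalerBl; congr (_ *: _).
  by rewrite mulrBr mulrC [_ * mu ^ _]mulrC.
have c_s k : k \in s -> c k = 0.
  move=> k_s; move/eqP: (IH _ s_uniq sums0' k k_s).
  rewrite scaler_eq0 subr_eq0 => /orP[/eqP/expfz_2_inj ek | /eqP //].
  by move: k0_ns; rewrite -ek map_f.
move=> k; rewrite inE => /orP[/eqP -> | /c_s //].
have := sums0 1 (oner_neq0 _); rewrite big_cons big_seq big1 ?addr0 ?exp1rz ?scale1r //.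
by move=> j j_s; rewrite c_s // scaler0.
Qed.

End WeightedSums.

Section TGWAGrading.
Variable F : numFieldType.
Variables (a1 a2 : F) (t1 t2 : {poly F}).
Variables (Tt : algType F) (U Y1p Y1m Y2p Y2m : Tt).
Hypothesis presT : TGWA_presentation a1 a2 t1 t2 U Y1p Y1m Y2p Y2m.
Local Notation gen := (tgen_val U Y1p Y1m Y2p Y2m).
Local Notation word := (word_val U Y1p Y1m Y2p Y2m).
Local Notation lincomb := (lincomb U Y1p Y1m Y2p Y2m).

Definition deg_weight (N : nat) (g : int * int) : int := g.1 + g.2 * N%:Z.

Definition scales_by_degree (th : Tt -> Tt) (mu : F) (N : nat) :=
  forall x, th (gen x) = mu ^ deg_weight N (tgen_deg x) *: gen x.

Lemma scaling_lrmorph (mu : F) (N : nat) : mu != 0 ->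
  exists th : {lrmorphism Tt -> Tt}, scales_by_degree th mu N.
Proof.
move=> mu_neq0; have muN_neq0 : mu ^+ N != 0 by rewrite expf_neq0.
have rel := TGWA_rel_scale mu_neq0 muN_neq0 presT.1.
have [[th [thU th1p th1m th2p th2m]] _] := presT.2 _ _ _ _ _ _ rel.
exists th; case=> /=; rewrite /deg_weight /=.
- by rewrite thU mul0r addr0 expr0z scale1r.
- by rewrite th1p mul0r addr0 expr1z.
- by rewrite th1m mul0r addr0 -exprz_inv expr1z.
- by rewrite th2p add0r mul1r.
- by rewrite th2m add0r mulN1r -exprz_inv -exprVn.
Qed.

Lemma scaling_lincomb (th : {lrmorphism Tt -> Tt}) mu N g l : mu != 0 ->
  scales_by_degree th mu N -> all (fun p => word_deg p.2 == g) l ->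
  th (lincomb l) = mu ^ deg_weight N g *: lincomb l.
Proof.
move=> mu_neq0 th_gen.
have th_word w : th (word w) = mu ^ deg_weight N (word_deg w) *: word w.
  elim: w => [|x w IH]; first by rewrite word_val_nil lrmorph1 /deg_weight mul0r expr0z scale1r.
  rewrite word_val_cons lrmorphM th_gen IH -scalerAl -scalerAr scalerA -expfzDr //.
  by congr (_ ^ _ *: _); rewrite /deg_weight word_deg_cons /=; ring.
elim: l => [|p l IH] /=; first by rewrite lincomb_nil lrmorph0 scaler0.
move=> /andP[/eqP p_deg l_deg]; rewrite lincomb_cons lrmorphD lrmorphZ th_word p_deg IH //.
by rewrite scalerDr !scalerA mulrC.
Qed.

Lemma deg_part_annihilated (f : {poly F}) l g : peval f U * lincomb l = 0 ->
  g \in [seq word_deg p.2 | p <- l] -> peval f U * lincomb (deg_part g l) = 0.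
Proof.
move=> fl g_l; set S := undup [seq word_deg p.2 | p <- l].
have S_uniq : uniq S := undup_uniq _.
have l_S := all_word_deg_in_degs l.
set M := (\sum_(h <- S) absz h.1)%N.
have le_M h : h \in S -> (absz h.1 <= M)%N.
  by move=> h_S; rewrite /M (bigD1_seq h) //= leq_addr.
(* Weights [h.1 + h.2 N] separate the degrees in [S] once [N > 2 max |h.1|]. *)
have weight_inj : {in S &, injective (deg_weight (2 * M).+1)}.
  move=> [h1 h2] [k1 k2] /le_M le_h /le_M le_k; rewrite /deg_weight /= in le_h le_k *.
  move=> E; have E2 : h2 = k2 by nia.
  by congr (_, _); rewrite E2 in E; lia.
apply: (@weighted_sums_eq0 _ _ _ S (deg_weight (2 * M).+1)
  (fun h => peval f U * lincomb (deg_part h l))); last by rewrite mem_undup.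
  by rewrite map_inj_in_uniq.
move=> mu mu_neq0; have [th th_gen] := scaling_lrmorph (2 * M).+1 mu_neq0.
have thU : th U = U by have := th_gen GU; rewrite /deg_weight /= mul0r addr0 expr0z scale1r.
have := congr1 th fl; rewrite lrmorph0 lrmorphM lrmorph_peval thU.
rewrite (lincomb_deg_parts _ _ _ _ _ S_uniq l_S).
rewrite (big_morph th (lrmorphD th) (lrmorph0 th)) mulr_sumr => sum0.
apply: (etrans _ sum0); apply: eq_bigr => h _.
by rewrite (scaling_lincomb (g := h) mu_neq0 th_gen) ?filter_all // scalerAr.
Qed.

Lemma torsion_graded : graded_ideal U Y1p Y1m Y2p Y2m (torsion U).
Proof.
split; first exact: torsion_ideal presT.
move=> a [f [f_neq0 fa]]; have [l a_l] := TGWA_spanned presT a.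
set S := undup [seq word_deg p.2 | p <- l].
exists S, (fun g => lincomb (deg_part g l)); split; first exact: undup_uniq.
split.
  by rewrite a_l; apply: lincomb_deg_parts; [exact: undup_uniq | exact: all_word_deg_in_degs].
move=> g; rewrite mem_undup => g_l; split.
  by exists f; split=> //; apply: deg_part_annihilated => //; rewrite -a_l.
by apply/homogeneousP; exists (deg_part g l) => //; exact: filter_all.
Qed.

Hypotheses (t1_neq0 : t1 != 0) (t2_neq0 : t2 != 0).
Hypothesis R_embeds : forall f : {poly F}, f != 0 -> peval f U != 0.

Lemma torsion_meets_R_trivially : meets_R_trivially U (torsion U).
Proof.
move=> r [f [f_neq0 fr]]; have [-> | r_neq0] := eqVneq r 0; first exact: peval0.
by move: (R_embeds (mulf_neq0 f_neq0 r_neq0)); rewrite pevalM fr eqxx.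
Qed.

Lemma torsion_TGWA_kernel a : torsion U a <-> TGWA_kernel U Y1p Y1m Y2p Y2m a.
Proof.
split=> [a_tor | /(TGWA_kernel_torsion t1_neq0 t2_neq0 presT) //].
exists [:: a]; split; first by rewrite big_seq1.
move=> b; rewrite inE => /eqP ->; exists (torsion U).
by split=> //; [exact: torsion_graded | exact: torsion_meets_R_trivially].
Qed.

End TGWAGrading.

Section QuotientIso.
Variable F : fieldType.
Variables (B A T : algType F) (pi : {lrmorphism B -> A}) (sigma : {lrmorphism B -> T}).
Hypotheses (pi_surj : forall y, exists x, pi x = y) (sigma_surj : forall z, exists x, sigma x = z).
Hypothesis same_kernel : forall x, pi x = 0 <-> sigma x = 0.

Lemma same_kernel_eq x x' : pi x = pi x' <-> sigma x = sigma x'.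
Proof.
split=> E; apply/eqP; rewrite -subr_eq0 -lrmorphB; apply/eqP/same_kernel;
  by rewrite lrmorphB E subrr.
Qed.

Definition quotient_map (y : A) : T := sigma (sval (cid (pi_surj y))).

Lemma quotient_mapE x : quotient_map (pi x) = sigma x.
Proof. by rewrite /quotient_map; case: cid => x' /= /same_kernel_eq. Qed.

Lemma quotient_map_zmod : zmod_morphism quotient_map.
Proof.
move=> y z; have [[x <-] [x' <-]] := (pi_surj y, pi_surj z).
by rewrite -lrmorphB !quotient_mapE lrmorphB.
Qed.

Lemma quotient_map_monoid : monoid_morphism quotient_map.
Proof.
split; first by rewrite -(lrmorph1 pi) quotient_mapE rmorph1.
move=> y z; have [[x <-] [x' <-]] := (pi_surj y, pi_surj z).
by rewrite -lrmorphM !quotient_mapE lrmorphM.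
Qed.

Lemma quotient_map_scalable : scalable quotient_map.
Proof. by move=> c y; have [x <-] := pi_surj y; rewrite -lrmorphZ !quotient_mapE lrmorphZ. Qed.

HB.instance Definition _ := GRing.isZmodMorphism.Build A T quotient_map quotient_map_zmod.
HB.instance Definition _ := GRing.isMonoidMorphism.Build A T quotient_map quotient_map_monoid.
HB.instance Definition _ :=
  GRing.isScalable.Build F A T *:%R quotient_map quotient_map_scalable.

Lemma quotient_iso : exists f : {lrmorphism A -> T}, bijective f.
Proof.
exists quotient_map, (fun z => pi (sval (cid (sigma_surj z)))) => [y | z].
  by have [x <-] := pi_surj y; case: cid => x' /=; rewrite quotient_mapE => /same_kernel_eq.
by case: cid => x /= <-; rewrite quotient_mapE.
Qed.

End QuotientIso.

Lemma KFP_quotient_peval_neq0 (F : fieldType) (At Q : algType F) (h : At)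
    (pi : {lrmorphism At -> Q}) (f : {poly F}) :
  KFP_quotient h pi -> f != 0 -> peval f h != 0.
Proof.
move=> [_ pi_ker] f_neq0; apply: contra_neq (oner_neq0 Q) => fh0.
by rewrite -(lrmorph1 pi); apply/pi_ker; exists f; rewrite mulr1 fh0.
Qed.

Unset Implicit Arguments.

Theorem mainTheorem7 (R : realType) (a1 a2 : R[i]) (p1 p2 : {poly R[i]}) :
  p1 != 0 -> p2 != 0 ->
  (p1 \Po ('X + (a2 / 2%:R)%:P)) * (p2 \Po ('X + (a1 / 2%:R)%:P)) =
  (p1 \Po ('X - (a2 / 2%:R)%:P)) * (p2 \Po ('X - (a1 / 2%:R)%:P)) ->
  forall (At : algType R[i]) (H X1p X1m X2p X2m : At),
    KFP_presentation a1 a2 p1 p2 H X1p X1m X2p X2m ->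
  forall (A : algType R[i]) (pi : {lrmorphism At -> A}),
    KFP_quotient H pi ->
  forall (Tt : algType R[i]) (U Y1p Y1m Y2p Y2m : Tt),
    TGWA_presentation a1 a2 p1 p2 U Y1p Y1m Y2p Y2m ->
  forall (T : algType R[i]) (rho : {lrmorphism Tt -> T}),
    TGWA_quotient U Y1p Y1m Y2p Y2m rho ->
  exists f : {lrmorphism A -> T}, bijective f.
Proof.
move=> p1_neq0 p2_neq0 _ At H X1p X1m X2p X2m presA A pi quotA.
move=> Tt U Y1p Y1m Y2p Y2m presT T rho quotT.
have [phi [psi [phiK psiK phiH]]] :=
  presents_iso (@KFP_TGWA_rel _ a1 a2 p1 p2) presA presT.
have R_embeds f : f != 0 -> peval f U != 0.
  move=> /(KFP_quotient_peval_neq0 quotA); apply: contra_neq => fU0.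
  by apply: (can_inj phiK); rewrite lrmorph_peval phiH fU0 lrmorph0.
apply: (@quotient_iso _ _ _ _ pi (rho \o phi)); first exact: quotA.1.
  by move=> z; have [y <-] := quotT.1 z; exists (psi y); rewrite /= psiK.
move=> x; rewrite /= quotT.2 -(torsion_TGWA_kernel presT p1_neq0 p2_neq0 R_embeds).
by rewrite -phiH -torsion_lrmorph // quotA.2.
Qed.
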